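(* Let $g\ge 1$, let $\mathfrak{m}_g$ be a rooted unicellular map of genus $g$, and let $\mathfrak{p}=((\mathfrak{m}_{g},\tau),(\mathfrak{m}_{g_1},\tau_1),\ldots,(\mathfrak{m}_{g_{r-1}},\tau_{r-1}),(\mathfrak{m}_0,\varnothing))$ be a blueprint of $\mathfrak{m}_g$ consisting of $r$ slicings. Then $1\le r\le g$, and the planar tree $\mathfrak{m}_0$ equipped with the induced vertex labels $(\sigma_v)_v$, $\sigma_v\in\mathbb{F}_2^r$ (defined in the context), is a $\lambda$-tree. In particular, $(\mathfrak{m}_g,\mathfrak{p})$ induces a unique $\lambda$-tree $\mathfrak{m}_0^{(\sigma_v)_v}$.
   Context: A rooted unicellular map with $m$ edges is given by permutations $\sigma$, $\alpha$ on the half-edge set $H=[2m]$, where $\alpha$ is a fixed-point-free involution (edges), the cycles of $\sigma$ are the vertices (with $\sigma$ encoding counterclockwise rotation around a vertex), and $\gamma=\alpha\circ\sigma$ has exactly one cycle (the boundary component); one half-edge is distinguished as the root. Its genus $g$ is given by $v-m+1=2-2g$, $v$ the number of vertices; genus $0$ means a rooted planar tree. The order $<_\gamma$ on half-edges is the order of appearance along the cycle $\gamma$ starting from the root; vertices are compared via their $<_\gamma$-minimal half-edges. A trisection is a half-edge $\tau$ with $\tau\le_\gamma\sigma^{-1}(\tau)$ which is not the $<_\gamma$-minimal half-edge of its vertex; a map of genus $g$ has exactly $2g$ trisections. Slicing (Chapuy, ''A new combinatorial identity for unicellular maps, via a direct bijective approach'', 2011): given a unicellular map $\mathfrak{m}$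 of genus $g'$ and a trisection $\tau$, Chapuy's slicing map $\Xi$ yields $\Xi(\mathfrak{m},\tau)=(\mathfrak{m}',v_1,\ldots,v_{2k+1})$, where $k\ge 1$, $\mathfrak{m}'$ is a unicellular map of genus $g'-k$, and $v_1,\ldots,v_{2k+1}$ are the vertices of $\mathfrak{m}'$ created by slicing the vertex of $\tau$, ordered by $<_\gamma$; $\Xi$ is a bijection whose inverse is the gluing map $\Lambda$. A blueprint of $(\mathfrak{m}_g,\tau)$ is a sequence $((\mathfrak{m}_{g},\tau),(\mathfrak{m}_{g_1},\tau_1),\ldots,(\mathfrak{m}_{g_{r-1}},\tau_{r-1}),(\mathfrak{m}_0,\varnothing))$ where each $\tau_i$ is a trisection of $\mathfrak{m}_{g_i}$ ($\mathfrak{m}_{g_0}=\mathfrak{m}_g,\tau_0=\tau$), $(\mathfrak{m}_{g_{i+1}},V_{i+1})=\Xi(\mathfrak{m}_{g_i},\tau_i)$ for $0\le i<r$ ($V_{i+1}$ the set of created vertices; this is the $(i+1)$-st slicing), and $\mathfrak{m}_{g_r}=\mathfrak{m}_0$ has genus $0$. A blueprint of $\mathfrak{m}_g$ is a blueprint of $(\mathfrak{m}_g,\tau)$ for some trisection $\tau$. Induced labels: a vertex of $\mathfrak{m}_0$ is involved in the $s$-th slicing if it is one of the vertices of $V_s$ or arises from one of them by later slicings. First give each vertex $v$ of $\mathfrak{m}_0$ the label $\sigma'_v\in\mathbb{F}_2^r$ whose $s$-th coordinate is $1$ iff $v$ is involved in the $s$-th slicing. Then reduce: for $i=r,r-1,\ldots,2$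 in turn, for every vertex $v$ with $\sigma_v|_i=1$ that is not the $<_\gamma$-minimal vertex among the vertices $u$ with $\sigma_u|_i=1$ (''regular at $i$''), set $\sigma_v|_h=0$ for all $h<i$; the resulting labels are $(\sigma_v)_v$. $\lambda$-tree: a rooted planar tree with boundary component $\gamma$ in which each vertex $v$ carries a label $\sigma_v\in\mathbb{F}_2^r$ such that (i) $\sum_{v,h}\sigma_v|_h=2g+r$ (counting the entries equal to $1$), where $1\le r\le g$; (ii) for each $h$, the number of vertices $v$ with $\sigma_v|_h=1$ is odd; (iii) for $h<i$, at most one vertex $v$ has $\sigma_v|_h=\sigma_v|_i=1$, and any such vertex is $<_\gamma$-minimal among all vertices $u$ with $\sigma_u|_i=1$. *)

From mathcomp Require Import all_boot all_fingroup.
Set Implicit Arguments. Unset Strict Implicit. Unset Printing Implicit Defensive.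

(* A (candidate) rooted map on the half-edge set H = 'I_n (n = 2m). *)
Record umap (n : nat) := UMap { sg : {perm 'I_n}; al : {perm 'I_n}; root : 'I_n }.

Section Maps.
Variable n : nat.
Implicit Types (M : umap n) (h : 'I_n).

(* gamma = alpha o sigma (apply sigma first); in mathcomp (s * t) x = t (s x) *)
Definition gamma M : {perm 'I_n} := (sg M * al M)%g.

Definition is_umap M : bool :=
  [&& [forall h, al M (al M h) == h], [forall h, al M h != h]
    & #|porbits (gamma M)| == 1].

(* v - m + 1 = 2 - 2g, with v = #vertices, m = n/2 edges *)
Definition genus M : nat := (n./2 + 1 - #|porbits (sg M)|)./2.

(* position along the tour gamma, starting at the root: defines <_gamma *)
Definition pos M h : nat := findex (gamma M) (root M) h.

Definition is_vmin M h : bool :=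
  [forall h' in porbit (sg M) h, pos M h <= pos M h'].

Definition trisection M h : bool :=
  (pos M h <= pos M ((sg M)^-1%g h)) && ~~ is_vmin M h.

(* key of a vertex (set of half-edges): position of its minimal half-edge;
   vertices are compared via these keys *)
Definition vkey M (v : {set 'I_n}) : nat := \big[minn/n]_(h in v) pos M h.

Definition vmin_set M (V : {set {set 'I_n}}) : {set 'I_n} :=
  [set h | (porbit (sg M) h \in V) && is_vmin M h].
Definition glue_seq M (V : {set {set 'I_n}}) : seq 'I_n :=
  sort (fun a b => pos M a <= pos M b) (enum (vmin_set M V)).

(* Chapuy's gluing Lambda(M', V) = (M, t): with a_1 <_gamma ... <_gamma a_{2k+1}
   the minimal half-edges of the glued vertices, sigma = sigma' o (a_1 ... a_{2k+1}),
   same alpha and root, and the resulting trisection is a_{2k+1}. *)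
Definition gluing M' (V : {set {set 'I_n}}) M (t : 'I_n) : Prop :=
  [/\ al M = al M', root M = root M',
      (forall x, sg M x = sg M' (next (glue_seq M' V) x))
    & t = last (root M') (glue_seq M' V)].

(* Xi(M, t) = (M', V) : the inverse of the gluing map *)
Definition slicing M (t : 'I_n) M' (V : {set {set 'I_n}}) : Prop :=
  [/\ is_umap M', V \subset porbits (sg M'), odd #|V| && (3 <= #|V|),
      genus M' + (#|V|).-1./2 = genus M
    & gluing M' V M t].

(* blueprint with r slicings: Ms 0 = M, (Ms i.+1, Vs i) = Xi(Ms i, ts i),
   (Vs i is the set V_{i+1} of created vertices), Ms r of genus 0 *)
Definition blueprint M (r : nat) (Ms : nat -> umap n) (ts : nat -> 'I_n)
    (Vs : nat -> {set {set 'I_n}}) : Prop :=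
  [/\ Ms 0 = M,
      (forall i, i < r -> trisection (Ms i) (ts i) /\
                          slicing (Ms i) (ts i) (Ms i.+1) (Vs i))
    & genus (Ms r) = 0].

(* labels: vertex (set of half-edges) -> coordinate h (1 <= h <= r) -> bit *)
Definition labeling := {set 'I_n} -> nat -> bool.

Definition min_at (T : umap n) (L : labeling) (i : nat) (u : {set 'I_n}) : bool :=
  [forall w in porbits (sg T), L w i ==> (vkey T u <= vkey T w)].

(* initial labels sigma'_v: v involved in slicing s iff v arises from a
   vertex of V_s, i.e. its half-edges lie in the union of V_s *)
Definition init_labels (r : nat) (Vs : nat -> {set {set 'I_n}}) : labeling :=
  fun u (s : nat) => (1 <= s <= r) && (u \subset cover (Vs s.-1)).

Definition red_step (T : umap n) (i : nat) (L : labeling) : labeling :=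
  fun u (s : nat) => if [&& s < i, L u i & ~~ min_at T L i u] then false else L u s.

Definition induced_labels (T : umap n) (r : nat) (Vs : nat -> {set {set 'I_n}})
  : labeling :=
  foldl (fun L i => red_step T i L) (init_labels r Vs) (rev (iota 2 r.-1)).

Definition lambda_tree (g r : nat) (T : umap n) (L : labeling) : Prop :=
  [/\ is_umap T /\ genus T = 0,
      1 <= r <= g,
      \sum_(v in porbits (sg T)) \sum_(1 <= s < r.+1) (L v s : nat) = 2 * g + r,
      (forall s : nat, 1 <= s <= r -> odd #|[set v in porbits (sg T) | L v s]|)
    & (forall s i : nat, 1 <= s -> s < i -> i <= r ->
         #|[set v in porbits (sg T) | L v s && L v i]| <= 1 /\
         (forall v, v \in porbits (sg T) -> L v s -> L v i -> min_at T L i v))].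

End Maps.

(* Slicing only splits vertices: the vertex of [x] in [Ms i] is the union of the vertices
   created by the (i+1)-st slicing if the vertex of [x] in [Ms (i+1)] is one of them, and is
   unchanged otherwise. By downward induction on [i], once the reductions at [r, ..., i+1]
   are done, each vertex of [Ms i] contains a representative vertex of the tree, the only
   one inside it that may still carry coordinates [<= i]; the reduction at [i+1] keeps, inside the merged vertex, the
   [<_gamma]-minimal of the representatives of the glued vertices. Hence coordinate [s] is
   set exactly on a copy of [V_s], of odd size [2k_s + 1], and since the genus drops by [k_s]
   at the s-th slicing the labels contain [2g + r] ones; condition (iii) is what the
   reduction enforces, and [|V_s| >= 3] gives [1 <= r <= g]. *)

From Pilot Require Import Defs.
From mathcomp Require Import all_boot all_fingroup.
From mathcomp Require Import order zify.
Set Implicit Arguments. Unset Strict Implicit. Unset Printing Implicit Defensive.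

Section PermOrbits.
Variable T : finType.
Implicit Types (s t : {perm T}) (x y : T).

Lemma porbit_sub_closed s (A : {set T}) x :
  x \in A -> {in A, forall y, s y \in A} -> porbit s x \subset A.
Proof.
move=> xA sA; apply/subsetP=> _ /porbitP[i ->]; rewrite permX.
by elim: i => //= i IH; exact: sA.
Qed.

Lemma mem_porbits s x : porbit s x \in porbits s.
Proof. exact: imset_f. Qed.

Lemma porbitS s x : porbit s (s x) = porbit s x.
Proof. by have := porbit_perm s 1 x; rewrite expg1. Qed.

Lemma porbit_of_mem s x y : y \in porbit s x -> porbit s y = porbit s x.
Proof. by move=> yx; apply/eqP; rewrite eq_porbit_mem. Qed.

Lemma porbit_closed s x y : y \in porbit s x -> s y \in porbit s x.
Proof. by rewrite -!eq_porbit_mem porbitS. Qed.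

Lemma porbit_eq_on s t x :
  {in porbit t x, s =1 t} -> porbit s x = porbit t x.
Proof.
move=> st.
have sub : porbit s x \subset porbit t x.
  by apply: porbit_sub_closed (porbit_id _ _) _ => y yx; rewrite st // porbit_closed.
apply/eqP; rewrite eqEsubset sub; apply: porbit_sub_closed (porbit_id _ _) _ => y yx.
by rewrite -st ?(subsetP sub) // porbit_closed.
Qed.

Lemma mem_cover_porbit s (V : {set {set T}}) y :
  V \subset porbits s -> (y \in cover V) = (porbit s y \in V).
Proof.
move=> sV; apply/bigcupP/idP => [[B BV yB]|yV]; last by exists (porbit s y); rewrite ?porbit_id.
have /imsetP[z _ Bz] := subsetP sV _ BV.
by rewrite (_ : porbit s y = B) // Bz; apply/eqP; rewrite eq_porbit_mem -Bz.
Qed.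

End PermOrbits.

Lemma cycle_eq_fun (T U : eqType) (f : T -> U) p :
  path.cycle [rel a b | f a == f b] p -> {in p &, forall a b, f a = f b}.
Proof.
have path_eq x q : path [rel a b | f a == f b] x q -> {in q, forall y, f y = f x}.
  elim: q x => //= y q IH x /andP[/eqP fxy /IH fq] z.
  by rewrite inE => /predU1P[->|/fq->].
case: p => //= a0 p; rewrite rcons_path => /andP[/path_eq fp _].
have fa0 a : a \in a0 :: p -> f a = f a0.
  by rewrite inE => /predU1P[->|ap] //; rewrite fp // mem_rcons inE ap orbT.
by move=> a b /fa0-> /fa0->.
Qed.

(* [s] is [s'] precomposed with the cyclic shift along [c]: when the points of [c] lie
   on distinct cycles of [s'], these cycles merge into the single cycle [glued_orbit]. *)
Section CycleGluing.
Variables (T : finType) (s s' : {perm T}) (c : seq T).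
Hypothesis c_uniq : uniq c.
Hypothesis glueE : forall x, s x = s' (next c x).
Hypothesis c_sep : forall a b, a \in c -> b \in c -> b \in porbit s' a -> a = b.

Definition glued_orbit : {set T} := [set y | has (fun a => y \in porbit s' a) c].

Lemma glueE_notin x : x \notin c -> s x = s' x.
Proof. by move=> xc; rewrite glueE next_nth (negbTE xc). Qed.

Lemma porbit_glue_out x : x \notin glued_orbit -> porbit s x = porbit s' x.
Proof.
move=> xW; apply: porbit_eq_on => y yx; apply: glueE_notin; apply: contra xW => yc.
by rewrite inE; apply/hasP; exists y; rewrite // porbit_sym.
Qed.

Lemma porbit_glue_prev a : a \in c -> porbit s' a \subset porbit s (prev c a).
Proof.
move=> ac; set B := porbit s (prev c a).
have s'aB : s' a \in B by rewrite -[a in s' a](next_prev c_uniq) -glueE porbit_closed ?porbit_id.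
suff : porbit s' (s' a) \subset B :&: porbit s' a.
  by rewrite porbitS subsetI => /andP[].
apply: porbit_sub_closed => [|y]; first by rewrite inE s'aB -porbitS porbit_id.
rewrite !inE => /andP[yB ya]; rewrite porbit_closed // andbT.
have [yc|yc] := boolP (y \in c); first by rewrite -(c_sep ac yc ya).
by rewrite -glueE_notin // porbit_closed.
Qed.

Lemma porbit_glue_prevE a : a \in c -> porbit s a = porbit s (prev c a).
Proof.
by move=> ac; apply/eqP; rewrite eq_porbit_mem (subsetP (porbit_glue_prev ac)) ?porbit_id.
Qed.

Lemma porbit_glue_in x : x \in glued_orbit -> porbit s x = glued_orbit.
Proof.
have cyc : path.cycle [rel a b | porbit s a == porbit s b] c.
  by apply: (cycle_from_prev c_uniq) => a ac /=; rewrite -porbit_glue_prevE.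
have porbit_glued y : y \in glued_orbit -> exists2 a, a \in c & porbit s y = porbit s a.
  rewrite inE => /hasP[a ac ya]; exists a => //; apply/eqP.
  by rewrite eq_porbit_mem porbit_glue_prevE // (subsetP (porbit_glue_prev ac)).
move=> xW; have [a ac ->] := porbit_glued x xW.
apply/eqP; rewrite eqEsubset; apply/andP; split.
  apply: porbit_sub_closed => [|y].
    by rewrite inE; apply/hasP; exists a; rewrite ?porbit_id.
  rewrite !inE => /hasP[b bc yb]; apply/hasP.
  have [yc|yc] := boolP (y \in c); last by exists b; rewrite // glueE_notin // porbit_closed.
  by exists (next c y); rewrite ?mem_next // glueE porbit_closed ?porbit_id.
apply/subsetP=> y /porbit_glued[b bc yb]; rewrite -eq_porbit_mem yb.
by rewrite (cycle_eq_fun cyc bc ac).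
Qed.
End CycleGluing.

Section UnicellularMaps.
Variable n : nat.
Implicit Types (M : umap n) (h : 'I_n).

Lemma umap_fconnect_root M h : is_umap M -> fconnect (gamma M) (Defs.root M) h.
Proof.
case/and3P=> _ _ /eqP one_face.
have /card_le1_eqP/(_ (porbit (gamma M) h) (porbit (gamma M) (Defs.root M))) E :
  #|porbits (gamma M)| <= 1 by rewrite one_face.
have /porbitP[i ->] : h \in porbit (gamma M) (Defs.root M) by rewrite E ?porbit_id ?mem_porbits.
by rewrite permX fconnect_iter.
Qed.

Lemma pos_inj M : is_umap M -> injective (pos M).
Proof.
move=> UM h1 h2 E; rewrite -(iter_findex (umap_fconnect_root h1 UM)).
by rewrite -(iter_findex (umap_fconnect_root h2 UM)) -/(pos M h1) E.
Qed.

Lemma pos_lt M h : is_umap M -> pos M h < n.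
Proof.
move=> UM; apply: leq_trans (findex_max (umap_fconnect_root h UM)) _.
exact: leq_trans (max_card _) (eq_leq (card_ord n)).
Qed.

Lemma vkey_porbit M x : is_umap M ->
  exists2 h, h \in porbit (sg M) x & vkey M (porbit (sg M) x) = pos M h.
Proof.
move=> UM; have [h hx minE] := @Order.TotalTheory.eq_bigmin _ _ _ n x
  (mem (porbit (sg M) x)) (pos M) (porbit_id _ _) (fun h _ => ltnW (pos_lt h UM)).
by exists h => //; exact: minE.
Qed.

Lemma vkey_inj M u v : is_umap M -> u \in porbits (sg M) -> v \in porbits (sg M) ->
  vkey M u = vkey M v -> u = v.
Proof.
move=> UM /imsetP[x _ ->] /imsetP[y _ ->].
have [hx hxx ->] := vkey_porbit x UM; have [hy hyy ->] := vkey_porbit y UM.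
by move/(pos_inj UM) => E; rewrite -(porbit_of_mem hxx) -(porbit_of_mem hyy) E.
Qed.

Lemma exists_vmin M x : exists2 h, h \in porbit (sg M) x & is_vmin M h.
Proof.
have [h hx hmin] := arg_minnP (pos M) (porbit_id (sg M) x).
by exists h => //; apply/forall_inP => h'; rewrite (porbit_of_mem hx); apply: hmin.
Qed.

Lemma vmin_porbit_inj M h h' : is_umap M -> is_vmin M h -> is_vmin M h' ->
  h' \in porbit (sg M) h -> h = h'.
Proof.
move=> UM /forall_inP hmin /forall_inP h'min h'h; apply: (pos_inj UM); apply/eqP.
by rewrite eqn_leq hmin // h'min // porbit_sym.
Qed.

Lemma eq_min_at (T : umap n) (L L' : labeling n) i u :
  (forall w, L w i = L' w i) -> min_at T L i u = min_at T L' i u.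
Proof. by move=> LL'; apply: eq_forallb => w; rewrite LL'. Qed.

Lemma min_at_inj (T : umap n) (L : labeling n) i u v : is_umap T ->
  u \in porbits (sg T) -> v \in porbits (sg T) -> L u i -> L v i ->
  min_at T L i u -> min_at T L i v -> u = v.
Proof.
move=> UT uP vP Lu Lv /forall_inP umin /forall_inP vmin.
apply: (vkey_inj UT uP vP); apply/eqP; rewrite eqn_leq.
by move: (umin v vP) (vmin u uP); rewrite Lu Lv /= => -> ->.
Qed.

Lemma exists_min_at (T : umap n) (L : labeling n) i u :
  u \in porbits (sg T) -> L u i ->
  exists2 v, v \in porbits (sg T) & L v i && min_at T L i v.
Proof.
move=> uP Lu; have uC : (u \in porbits (sg T)) && L u i by rewrite uP.
have [v /andP[vP Lv] vmin] :=
  arg_minnP (P := fun w => (w \in porbits (sg T)) && L w i) (vkey T) uC.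
exists v; rewrite // Lv; apply/forall_inP => w wP; apply/implyP => Lw.
by apply: vmin; rewrite wP.
Qed.

Lemma porbit_slicing M t M' (V : {set {set 'I_n}}) x : slicing M t M' V ->
  porbit (sg M) x = if porbit (sg M') x \in V then cover V else porbit (sg M') x.
Proof.
case=> UM' sV _ _ [_ _ glueE _]; set c := glue_seq M' V.
have memc h : (h \in c) = (porbit (sg M') h \in V) && is_vmin M' h.
  by rewrite mem_sort mem_enum inE.
have c_uniq : uniq c by rewrite sort_uniq enum_uniq.
have c_sep a b : a \in c -> b \in c -> b \in porbit (sg M') a -> a = b.
  by rewrite !memc => /andP[_ amin] /andP[_ bmin]; apply: vmin_porbit_inj.
have glued_cover : glued_orbit (sg M') c = cover V.
  apply/setP=> y; rewrite (mem_cover_porbit _ sV) inE; apply/hasP/idP => [[a ac ya]|yV].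
    by move: ac; rewrite memc (porbit_of_mem ya) => /andP[].
  have [h hy hmin] := exists_vmin M' y.
  by exists h; rewrite 1?porbit_sym // memc (porbit_of_mem hy) yV.
case: ifP => xV.
  rewrite -glued_cover (porbit_glue_in c_uniq glueE c_sep) //.
  by rewrite glued_cover (mem_cover_porbit _ sV).
by rewrite (porbit_glue_out glueE) // glued_cover (mem_cover_porbit _ sV) xV.
Qed.

End UnicellularMaps.

Lemma nat_down_ind (P : nat -> Prop) j k : j <= k -> P k ->
  (forall i, j <= i -> i < k -> P i.+1 -> P i) -> P j.
Proof.
move=> jk Pk step.
suff down d i : j <= i <= k -> k - i = d -> P i by apply: (down (k - j)); rewrite ?leqnn.
elim: d i => [|d IH] i /andP[ji ik] Ed; first by have -> : i = k by lia.
by apply: step; [| lia | apply: IH; lia].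
Qed.

Section Reduction.
Variables (n : nat) (T : umap n) (i : nat) (L : labeling n) (u : {set 'I_n}) (s : nat).

Lemma red_step_sub : red_step T i L u s -> L u s.
Proof. by rewrite /red_step; case: ifP. Qed.

Lemma red_step_high : i <= s -> red_step T i L u s = L u s.
Proof. by move=> le_is; rewrite /red_step ltnNge le_is. Qed.

End Reduction.

Section Blueprint.
Variables (n r : nat) (Ms : nat -> umap n) (ts : nat -> 'I_n)
  (Vs : nat -> {set {set 'I_n}}).
Hypothesis umap_M0 : is_umap (Ms 0).
Hypothesis slice_chain : forall i, i < r -> slicing (Ms i) (ts i) (Ms i.+1) (Vs i).

Local Notation vx i x := (porbit (sg (Ms i)) x).
Local Notation vertices i := (porbits (sg (Ms i))).
Local Notation L0 := (init_labels r Vs).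

Lemma umap_Ms i : i <= r -> is_umap (Ms i).
Proof. by case: i => [//|i] /slice_chain[]. Qed.

Lemma Vs_sub i : i < r -> Vs i \subset vertices i.+1.
Proof. by case/slice_chain. Qed.

Lemma odd_card_Vs i : i < r -> odd #|Vs i|.
Proof. by case/slice_chain=> _ _ /andP[]. Qed.

Lemma card_Vs_ge3 i : i < r -> 3 <= #|Vs i|.
Proof. by case/slice_chain=> _ _ /andP[]. Qed.

Lemma card_Vs_genus i : i < r -> #|Vs i| + 2 * genus (Ms i.+1) = 2 * genus (Ms i) + 1.
Proof.
case/slice_chain=> _ _ /andP[Vodd _] <- _; set c := #|Vs i|.
have cE := odd_double_half c; rewrite Vodd add1n in cE.
rewrite -[c in c.-1]cE /= doubleK; rewrite -mul2n in cE; lia.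
Qed.

Lemma sum_card_Vs m : m <= r ->
  \sum_(i < m) #|Vs i| + 2 * genus (Ms m) = 2 * genus (Ms 0) + m.
Proof.
elim: m => [_|m IH mr]; first by rewrite big_ord0 add0n addn0.
by rewrite big_ord_recr /= -addnA card_Vs_genus // addnA IH ?(ltnW mr) // addn1 addnS.
Qed.

Lemma vx_slicing i x : i < r ->
  vx i x = if vx i.+1 x \in Vs i then cover (Vs i) else vx i.+1 x.
Proof. by move/slice_chain/porbit_slicing. Qed.

Lemma vx_sub i j x : i <= j -> j <= r -> vx j x \subset vx i x.
Proof.
move=> ij jr; apply: (nat_down_ind (P := fun i => vx j x \subset vx i x) ij) => // k _ kj sub.
apply: subset_trans sub _; rewrite (vx_slicing x (leq_trans kj jr)).
by case: ifP => [xV|_]; [exact: (bigcup_sup _ xV) | exact: subxx].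
Qed.

Lemma init_labels_vx x s : 1 <= s <= r -> L0 (vx r x) s = (vx s x \in Vs s.-1).
Proof.
move=> /andP[s1 sr]; rewrite /init_labels s1 sr.
have sV : Vs s.-1 \subset vertices s by rewrite -{2}(prednK s1) Vs_sub // prednK.
apply/idP/idP => [/subsetP xV | xV].
  by rewrite -(mem_cover_porbit _ sV) xV ?porbit_id.
exact: subset_trans (vx_sub x sr (leqnn r)) (bigcup_sup _ xV).
Qed.

Definition reduced_labels i : labeling n :=
  foldl (fun L j => red_step (Ms r) j L) L0 (rev (iota i.+1 (r - i))).

Lemma reduced_labels_r : reduced_labels r = L0.
Proof. by rewrite /reduced_labels subnn. Qed.

Lemma reduced_labelsS i : i < r -> reduced_labels i = red_step (Ms r) i.+1 (reduced_labels i.+1).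
Proof.
move=> ir; rewrite /reduced_labels -(subnSK ir).
by rewrite -[iota _ _.+1]/(i.+1 :: iota i.+2 _) rev_cons foldl_rcons.
Qed.

Lemma reduced_labels_diag j s u : j <= s -> s <= r -> reduced_labels j u s = reduced_labels s u s.
Proof.
move=> js sr; apply: (nat_down_ind (P := fun j => reduced_labels j u s = _) js) => // k _ ks <-.
by rewrite reduced_labelsS ?(leq_trans ks) // red_step_high.
Qed.

Lemma reduced_labels_mono j k s u : j <= k -> k <= r ->
  reduced_labels j u s -> reduced_labels k u s.
Proof.
move=> jk kr; apply: (nat_down_ind (P := fun j => reduced_labels j u s -> _) jk) => // i _ ik IH.
by rewrite reduced_labelsS ?(leq_trans ik) // => /red_step_sub/IH.
Qed.

(* The invariant of the reduction: after the steps at [r, ..., i+1], among the vertices of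
   the final tree lying in a vertex [w] of [Ms i], only [rep w] keeps coordinates [<= i]. *)
Definition represents i (rep : {set 'I_n} -> {set 'I_n}) : Prop :=
  (forall x, rep (vx i x) \in vertices r /\ rep (vx i x) \subset vx i x) /\
  (forall x s, s <= i ->
     reduced_labels i (vx r x) s = (vx r x == rep (vx i x)) && L0 (vx r x) s).

Lemma represents_r : represents r id.
Proof. by split=> [x | x s _]; rewrite ?mem_porbits ?subxx ?reduced_labels_r ?eqxx. Qed.

Lemma represents_point i rep x : represents i rep ->
  exists2 y, rep (vx i x) = vx r y & vx i y = vx i x.
Proof.
move=> [/(_ x)[/imsetP[y _ ->] yx] _]; exists y => //.
by apply: porbit_of_mem; apply: (subsetP yx); rewrite porbit_id.
Qed.

Lemma represents_diag i rep x : 1 <= i <= r -> represents i rep ->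
  reduced_labels i (vx r x) i = (vx r x == rep (vx i x)) && (vx i x \in Vs i.-1).
Proof. by move=> ir [_ rep_labels]; rewrite rep_labels // init_labels_vx. Qed.

Section RepresentsStep.
Variables (i : nat) (rep : {set 'I_n} -> {set 'I_n}).
Hypotheses (i_lt_r : i < r) (rep_spec : represents i.+1 rep).

Let diag_rep x : reduced_labels i.+1 (vx r x) i.+1 =
  (vx r x == rep (vx i.+1 x)) && (vx i.+1 x \in Vs i) :=
  represents_diag x (i_lt_r : 1 <= i.+1 <= r) rep_spec.

Lemma exists_min_rep : exists y, [/\ vx i.+1 y \in Vs i, vx r y = rep (vx i.+1 y)
  & min_at (Ms r) (reduced_labels i.+1) i.+1 (vx r y)].
Proof.
have /set0Pn[w wV] : Vs i != set0 by rewrite -card_gt0 (leq_trans _ (card_Vs_ge3 i_lt_r)).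
have /imsetP[x _ wE] := subsetP (Vs_sub i_lt_r) w wV.
have [y0 y0E y0x] := represents_point x rep_spec.
have y0L : reduced_labels i.+1 (vx r y0) i.+1 by rewrite diag_rep y0x -y0E eqxx -wE.
have [_ /imsetP[y _ ->] /andP[+ ymin]] := exists_min_at (mem_porbits _ y0) y0L.
by rewrite diag_rep => /andP[/eqP yE yV]; exists y.
Qed.

Section MergedRepresentative.
Variable y : 'I_n.
Hypotheses (yV : vx i.+1 y \in Vs i) (yE : vx r y = rep (vx i.+1 y))
  (ymin : min_at (Ms r) (reduced_labels i.+1) i.+1 (vx r y)).

Let rep' w := if w == cover (Vs i) then vx r y else rep w.

Lemma rep'_vx x : rep' (vx i x) = if vx i.+1 x \in Vs i then vx r y else rep (vx i.+1 x).
Proof.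
rewrite /rep' (vx_slicing x i_lt_r); case: (boolP (vx i.+1 x \in Vs i)) => xV.
  by rewrite eqxx.
case: eqP => // xW.
by rewrite -(mem_cover_porbit _ (Vs_sub i_lt_r)) -xW porbit_id in xV.
Qed.

Lemma rep_min_at x : vx i.+1 x \in Vs i ->
  (vx r x == rep (vx i.+1 x)) && min_at (Ms r) (reduced_labels i.+1) i.+1 (vx r x)
  = (vx r x == vx r y).
Proof.
move=> xV; apply/andP/eqP => [[/eqP xR xmin] | xy].
  apply: (min_at_inj (umap_Ms (leqnn r)) (mem_porbits _ x) (mem_porbits _ y) _ _ xmin ymin).
    by rewrite diag_rep xR eqxx xV.
  by rewrite diag_rep -yE eqxx yV.
have xy' : vx i.+1 x = vx i.+1 y.
  apply: porbit_of_mem; apply: (subsetP (vx_sub y i_lt_r (leqnn r))).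
  by rewrite -xy porbit_id.
by rewrite xy' -yE xy eqxx.
Qed.

Lemma represents_merged : represents i rep'.
Proof.
have [rep_vertex rep_labels] := rep_spec.
split=> [x | x s si].
  rewrite rep'_vx (vx_slicing x i_lt_r); case: ifP => xV; last exact: rep_vertex.
  split; first exact: mem_porbits.
  exact: subset_trans (vx_sub y i_lt_r (leqnn r)) (bigcup_sup _ yV).
rewrite reduced_labelsS // /red_step ltnS si /= rep'_vx diag_rep rep_labels ?(leqW si) //.
case: (boolP (vx i.+1 x \in Vs i)) => xV; last by rewrite andbF.
rewrite andbT -(rep_min_at xV).
by case: (_ == _); case: (min_at _ _ _ _).
Qed.

End MergedRepresentative.

Lemma represents_step : exists rep', represents i rep'.
Proof.
have [y [yV yE ymin]] := exists_min_rep.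
by eexists; exact: represents_merged yV yE ymin.
Qed.

End RepresentsStep.

Lemma represents_all i : i <= r -> exists rep, represents i rep.
Proof.
move=> ir; apply: (nat_down_ind (P := fun i => exists rep, represents i rep) ir).
  by exists id; exact: represents_r.
by move=> k _ kr [rep rep_spec]; exact: represents_step kr rep_spec.
Qed.

Lemma card_label_column s : 1 <= s <= r ->
  #|[set v in vertices r | reduced_labels 1 v s]| = #|Vs s.-1|.
Proof.
move=> /andP[s1 sr]; have [rep rep_spec] := represents_all sr.
have sV : Vs s.-1 \subset vertices s by rewrite -{2}(prednK s1) Vs_sub // prednK.
have column x : reduced_labels 1 (vx r x) s = (vx r x == rep (vx s x)) && (vx s x \in Vs s.-1).
  by rewrite reduced_labels_diag // (represents_diag _ _ rep_spec) ?s1.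
have -> : [set v in vertices r | reduced_labels 1 v s] = rep @: Vs s.-1.
  apply/setP=> v; rewrite inE; apply/andP/imsetP => [[/imsetP[x _ ->]] | [w wV ->]].
    by rewrite column => /andP[/eqP-> xV]; exists (vx s x).
  have /imsetP[x _ wE] := subsetP sV w wV.
  have [y yE yx] := represents_point x rep_spec.
  by rewrite wE yE mem_porbits column yx -yE eqxx -wE.
apply: card_in_imset => _ _ /(subsetP sV)/imsetP[x1 _ ->] /(subsetP sV)/imsetP[x2 _ ->].
have [y1 -> <-] := represents_point x1 rep_spec.
have [y2 -> <-] := represents_point x2 rep_spec.
move=> y12; apply: porbit_of_mem; apply: (subsetP (vx_sub y2 sr (leqnn r))).
by rewrite -y12 porbit_id.
Qed.

Lemma sum_labels :
  \sum_(v in vertices r) \sum_(1 <= s < r.+1) (reduced_labels 1 v s : nat) = \sum_(i < r) #|Vs i|.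
Proof.
rewrite exchange_big big_add1 big_mkord; apply: eq_bigr => i _.
rewrite -[#|Vs i|]/#|Vs i.+1.-1| -card_label_column ?ltn_ord // -sum1_card.
rewrite big_mkcond [RHS]big_mkcond; apply: eq_bigr => v _.
by rewrite inE; case: (_ \in _); case: reduced_labels.
Qed.

Lemma label_min_at s i v : 1 <= s -> s < i -> i <= r ->
  reduced_labels 1 v s -> reduced_labels 1 v i -> min_at (Ms r) (reduced_labels 1) i v.
Proof.
move=> s1 si ir vs vi; have i1 : 1 <= i by lia.
have : reduced_labels i.-1 v s by apply: reduced_labels_mono vs; lia.
rewrite reduced_labelsS ?prednK //.
rewrite /red_step si -(reduced_labels_diag v i1 ir) vi /=.
rewrite (@eq_min_at _ _ _ (reduced_labels i)) => [|w]; last exact: reduced_labels_diag.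
by case: min_at.
Qed.

Lemma card_label_pair_le1 s i : 1 <= s -> s < i -> i <= r ->
  #|[set v in vertices r | reduced_labels 1 v s && reduced_labels 1 v i]| <= 1.
Proof.
move=> s1 si ir; apply/card_le1_eqP => u v; rewrite !inE.
move=> /and3P[uP us ui] /and3P[vP vs vi].
by apply: (min_at_inj (umap_Ms (leqnn r)) vP uP vi ui); apply: label_min_at si ir _ _.
Qed.

Lemma induced_labelsE : induced_labels (Ms r) r Vs = reduced_labels 1.
Proof. by rewrite /reduced_labels subn1. Qed.

Lemma blueprint_lambda_tree g : 1 <= g -> genus (Ms 0) = g -> genus (Ms r) = 0 ->
  (1 <= r <= g) /\ lambda_tree g r (Ms r) (induced_labels (Ms r) r Vs).
Proof.
move=> g1 genus0 genusr.
have genus_count := sum_card_Vs (leqnn r); rewrite genus0 genusr in genus_count.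
have r_gt0 : 0 < r.
  by rewrite lt0n; apply/eqP => r0; move: genusr; rewrite r0 genus0; lia.
have sum_ge : 3 * r <= \sum_(i < r) #|Vs i|.
  by rewrite mulnC -[r in r * 3]card_ord -sum_nat_const; apply: leq_sum => i _; exact: card_Vs_ge3.
have r_bounds : 0 < r <= g by rewrite r_gt0; lia.
rewrite induced_labelsE; split=> //; split=> //.
- by split; [exact: umap_Ms | exact: genusr].
- by rewrite sum_labels; lia.
- move=> s /andP[s1 sr]; rewrite card_label_column ?s1 //.
  by apply: odd_card_Vs; rewrite prednK.
- move=> s i s1 si ir; split; first exact: card_label_pair_le1.
  by move=> v _; exact: label_min_at.
Qed.

End Blueprint.

Theorem lemma1 (n g r : nat) (M : umap n) (Ms : nat -> umap n)
    (ts : nat -> 'I_n) (Vs : nat -> {set {set 'I_n}}) :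
  1 <= g -> is_umap M -> genus M = g -> blueprint M r Ms ts Vs ->
  (1 <= r <= g) /\ lambda_tree g r (Ms r) (induced_labels (Ms r) r Vs).
Proof.
move=> g1 umapM genusM [M0 slices genusr]; subst M.
have slice_chain i : i < r -> slicing (Ms i) (ts i) (Ms i.+1) (Vs i) by case/slices.
exact: blueprint_lambda_tree umapM slice_chain g g1 genusM genusr.
Qed.
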